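(* Let $K$ be an algebraically closed field of characteristic $2$ and, for $c\in K$, let $X_c=\{c\,\sigma_1\sigma_3+\sigma_4=0\}\subset\mathbb{P}^3_K$. For every $c\neq0$, $X_c$ has exactly $10$ singular points, namely the $\mathfrak{S}_4$-orbits of $(0,0,1,1)$ and $(0,0,0,1)$, and all of them are nodes ($A_1$-singularities).
   Context: $\sigma_i$ is the $i$-th elementary symmetric polynomial in $x_1,\dots,x_4$; $\mathfrak{S}_4$ permutes coordinates. A node is a double point whose projectivized tangent cone is a smooth conic. *)

From HB Require Import structures.
From mathcomp Require Import all_boot all_order all_algebra all_fingroup.
From mathcomp Require Export mpoly.
Set Implicit Arguments. Unset Strict Implicit. Unset Printing Implicit Defensive.
Import Order.TTheory GRing.Theory.
Local Open Scope ring_scope.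

Section Defs.
Variables (K : fieldType) (n : nat).

Definition Xc_poly (c : K) : {mpoly K[4]} :=
  c *: (mesym 4 K 1 * mesym 4 K 3) + mesym 4 K 4.

(* Homogeneous coordinates: a vector is a point of P^{n-1} iff nonzero. *)
Definition nonzero_vec (v : 'I_n -> K) : Prop := exists i, v i != 0.

Definition proj_eq (u v : 'I_n -> K) : Prop :=
  exists a : K, a != 0 /\ forall i, u i = a * v i.

(* singular point of the projective hypersurface {F = 0} (F(v)=0 and all
   partial derivatives vanish at v; in char 2 F(v)=0 is not implied by Euler) *)
Definition is_sing_pt (F : {mpoly K[n]}) (v : 'I_n -> K) : Prop :=
  F.@[v] = 0 /\ forall i : 'I_n, (F^`M(i)).@[v] = 0.

Definition translate (F : {mpoly K[n]}) (v : 'I_n -> K) : {mpoly K[n]} :=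
  F \mPo [tuple (v i)%:MP + 'X_i | i < n].

(* restriction to the hyperplane y_j = 0 (the affine chart x_j = v_j) *)
Definition restrict_chart (j : 'I_n) (p : {mpoly K[n]}) : {mpoly K[n]} :=
  p \mPo [tuple (if i == j then 0 else 'X_i) | i < n].

Definition hpart (d : nat) (p : {mpoly K[n]}) : {mpoly K[n]} :=
  \sum_(m <- msupp p | mdeg m == d) p@_m *: 'X_[m].

(* quadratic part of the local equation of {F = 0} at v in the chart j:
   it defines the tangent cone; its projectivization lives in
   P^{n-2} = P({y | y_j = 0}). *)
Definition tangent_quadric (F : {mpoly K[n]}) (v : 'I_n -> K) (j : 'I_n) :=
  hpart 2 (restrict_chart j (translate F v)).

Definition smooth_quadric (q : {mpoly K[n]}) (j : 'I_n) : Prop :=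
  q != 0 /\
  forall y : 'I_n -> K, y j = 0 -> nonzero_vec y ->
    ~ (q.@[y] = 0 /\ forall i : 'I_n, (q^`M(i)).@[y] = 0).

(* node: a singular point (so constant and linear terms of the local
   equation vanish) whose quadratic term is nonzero (double point) and
   whose projectivized tangent cone is a smooth conic; checked in every
   affine chart containing the point. *)
Definition is_node (F : {mpoly K[n]}) (v : 'I_n -> K) : Prop :=
  is_sing_pt F v /\
  forall j : 'I_n, v j != 0 -> smooth_quadric (tangent_quadric F v j) j.

End Defs.

Definition pt0011 (K : fieldType) : 'I_4 -> K :=
  fun i => if (2 <= (i : nat))%N then 1 else 0.
Definition pt0001 (K : fieldType) : 'I_4 -> K :=
  fun i => if (i : nat) == 3%N then 1 else 0.

Definition permute_coords (K : fieldType) (s : 'S_4) (v : 'I_4 -> K) :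
  'I_4 -> K := fun i => v (s i).

From HB Require Import structures.
From mathcomp Require Import all_boot all_order all_algebra all_fingroup.
From mathcomp Require Import mpoly ring.
Set Implicit Arguments. Unset Strict Implicit. Unset Printing Implicit Defensive.
Import Order.TTheory GRing.Theory.
Local Open Scope ring_scope.

(* Everything is reduced to explicit algebra in the four coordinates.
   1. Over an arbitrary commutative ring we write the quartic
      F = c s1 s3 + s4 as a function of a coordinate vector, together with
      its first variation (directional derivative) and the exact Taylor
      expansion F(a + z) = F(a) + F'(a)z + Q_a(z) + F'(z)a + F(z), whose
      pieces are homogeneous of degree 0,...,4 in z.  Since these formulas
      commute with ring morphisms, they transport to evaluation and
      substitution of multivariate polynomials: this computes the values
      and partial derivatives of [Xc_poly c] and its tangent quadric Q_a.
   2. In characteristic 2 the partial derivative of F in the direction x_i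
      does not involve x_i; a case analysis on the vanishing coordinates
      shows that, for c <> 0, the singular points are exactly the multiples
      of the 0/1 vectors with one or two entries equal to 1.
   3. At such a point the kernel of Q_a restricted to a chart is trivial,
      so the tangent cone is a smooth conic: every singular point is a node.
   4. The 0/1 vectors above are the S_4-orbits of (0,0,0,1) and (0,0,1,1);
      listing them gives the ten singular points. *)

Definition i0 : 'I_4 := @Ordinal 4 0 isT.
Definition i1 : 'I_4 := @Ordinal 4 1 isT.
Definition i2 : 'I_4 := @Ordinal 4 2 isT.
Definition i3 : 'I_4 := @Ordinal 4 3 isT.

Lemma ord4P (i : 'I_4) : i = i0 \/ i = i1 \/ i = i2 \/ i = i3.
Proof.
case: i => [[|[|[|[|m]]]] H]; last by [].
- by left; apply/val_inj.
- by right; left; apply/val_inj.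
- by right; right; left; apply/val_inj.
- by right; right; right; apply/val_inj.
Qed.

Ltac case4 i := case: (ord4P i) => [->|[->|[->|->]]].

(* The indicator vector of the set {k, l} of coordinates (for k = l, of a
   single coordinate): the singular points will be its multiples. *)
Definition pairv {R : nzSemiRingType} (k l : 'I_4) : 'I_4 -> R :=
  fun i => ((val i == val k) || (val i == val l) : nat)%:R.

Definition unitv {R : nzSemiRingType} (k : 'I_4) : 'I_4 -> R :=
  fun i => ((val i == val k) : nat)%:R.

Lemma pairvC {R : nzSemiRingType} (k l : 'I_4) : pairv (R:=R) k l =1 pairv l k.
Proof. by move=> i; rewrite /pairv orbC. Qed.

Section Projective.
Variables (K : fieldType) (n : nat).
Implicit Types (u v w : 'I_n -> K).

Lemma proj_eq_refl w : proj_eq w w.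
Proof. by exists 1; split; [exact: oner_neq0 | move=> i; rewrite mul1r]. Qed.

Lemma proj_eq_eqfunl u u' w : u =1 u' -> proj_eq u w -> proj_eq u' w.
Proof. by move=> h [a [ha hw]]; exists a; split => // i; rewrite -h. Qed.

Lemma proj_eq_eqfunr u w w' : w =1 w' -> proj_eq u w -> proj_eq u w'.
Proof. by move=> h [a [ha hw]]; exists a; split => // i; rewrite -h. Qed.

End Projective.

Section QuarticForm.
Variable R : comNzRingType.
Implicit Types (c : R) (x a z d : 'I_4 -> R).

Definition sym1 x := x i0 + x i1 + x i2 + x i3.
Definition sym3 x :=
  x i0 * x i1 * x i2 + x i0 * x i1 * x i3 + x i0 * x i2 * x i3 + x i1 * x i2 * x i3.
Definition sym4 x := x i0 * x i1 * x i2 * x i3.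

Definition quartic c x := c * (sym1 x * sym3 x) + sym4 x.

(* The parts of s3(a + z) and s4(a + z) linear in z, and of s4(a + z)
   quadratic in z. *)
Definition sym3_lin a z :=
  z i0 * (a i1 * a i2 + a i1 * a i3 + a i2 * a i3)
  + z i1 * (a i0 * a i2 + a i0 * a i3 + a i2 * a i3)
  + z i2 * (a i0 * a i1 + a i0 * a i3 + a i1 * a i3)
  + z i3 * (a i0 * a i1 + a i0 * a i2 + a i1 * a i2).
Definition sym4_lin a z :=
  z i0 * a i1 * a i2 * a i3 + a i0 * z i1 * a i2 * a i3
  + a i0 * a i1 * z i2 * a i3 + a i0 * a i1 * a i2 * z i3.
Definition sym4_quad a z :=
  z i0 * z i1 * a i2 * a i3 + z i0 * z i2 * a i1 * a i3 + z i0 * z i3 * a i1 * a i2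
  + z i1 * z i2 * a i0 * a i3 + z i1 * z i3 * a i0 * a i2 + z i2 * z i3 * a i0 * a i1.

(* First variation of the quartic at x in the direction d. *)
Definition dquartic c x d :=
  c * (sym1 d * sym3 x + sym1 x * sym3_lin x d) + sym4_lin x d.

(* The part of quartic c (a + z) quadratic in z: the local quadric at a. *)
Definition taylor2 c a z :=
  c * (sym1 a * sym3_lin z a + sym1 z * sym3_lin a z) + sym4_quad a z.

Definition vadd a z : 'I_4 -> R := fun i => a i + z i.

Definition polar2 c a z d :=
  taylor2 c a (vadd z d) - taylor2 c a z - taylor2 c a d.

Lemma quartic_taylor c a z :
  quartic c (vadd a z)
  = quartic c a + dquartic c a z + taylor2 c a z + dquartic c z a + quartic c z.
Proof.
rewrite /quartic /dquartic /taylor2 /sym1 /sym3 /sym4 /sym3_lin /sym4_lin.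
by rewrite /sym4_quad /vadd; ring.
Qed.

Lemma quartic_eqfun c x x' : x =1 x' -> quartic c x = quartic c x'.
Proof. by move=> h; rewrite /quartic /sym1 /sym3 /sym4 !h. Qed.

Lemma dquartic_eqfun c x x' d d' :
  x =1 x' -> d =1 d' -> dquartic c x d = dquartic c x' d'.
Proof. by move=> h h'; rewrite /dquartic /sym1 /sym3 /sym3_lin /sym4_lin !h !h'. Qed.

Lemma taylor2_eqfun c a a' z z' :
  a =1 a' -> z =1 z' -> taylor2 c a z = taylor2 c a' z'.
Proof. by move=> h h'; rewrite /taylor2 /sym1 /sym3_lin /sym4_quad !h !h'. Qed.

Lemma polar2_eqfun c a a' z z' d d' : a =1 a' -> z =1 z' -> d =1 d' ->
  polar2 c a z d = polar2 c a' z' d'.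
Proof.
move=> h hz hd; rewrite /polar2 (taylor2_eqfun c h hz) (taylor2_eqfun c h hd).
by congr (_ - _ - _); apply: taylor2_eqfun => // i; rewrite /vadd hz hd.
Qed.

End QuarticForm.

Section Morphisms.
Variables (R S : comNzRingType) (f : {rmorphism R -> S}).
Implicit Types (c : R) (x z d : 'I_4 -> R).

Lemma quartic_rmorph c x : f (quartic c x) = quartic (f c) (f \o x).
Proof. by rewrite /quartic /sym1 /sym3 /sym4 !(rmorphD, rmorphM). Qed.

Lemma dquartic_rmorph c x d :
  f (dquartic c x d) = dquartic (f c) (f \o x) (f \o d).
Proof.
by rewrite /dquartic /sym1 /sym3 /sym3_lin /sym4_lin !(rmorphD, rmorphM).
Qed.

Lemma taylor2_rmorph c x z : f (taylor2 c x z) = taylor2 (f c) (f \o x) (f \o z).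
Proof. by rewrite /taylor2 /sym1 /sym3_lin /sym4_quad !(rmorphD, rmorphM). Qed.

Lemma polar2_rmorph c x z d :
  f (polar2 c x z d) = polar2 (f c) (f \o x) (f \o z) (f \o d).
Proof.
rewrite /polar2 !rmorphB !taylor2_rmorph; congr (_ - _ - _).
by apply: taylor2_eqfun => // i; rewrite /vadd /= rmorphD.
Qed.

End Morphisms.

(* The ordinals produced by unfolding big operators over 'I_4 are replaced
   by the named indices i0..i3. *)
Ltac name_ord o :=
  let v := eval compute in (nat_of_ord o) in
  match v with
  | 0%N => rewrite (_ : o = i0); last by apply/val_inj
  | 1%N => rewrite (_ : o = i1); last by apply/val_inj
  | 2%N => rewrite (_ : o = i2); last by apply/val_inj
  | 3%N => rewrite (_ : o = i3); last by apply/val_inj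
  end.
Ltac name_vars := repeat match goal with |- context [ @mpolyX 4 _ U_(?o) ] =>
  lazymatch o with i0 => fail | i1 => fail | i2 => fail | i3 => fail
  | _ => name_ord o end end.

Lemma mwidenX1 (K : fieldType) n (i : 'I_n) :
  mwiden ('X_i : {mpoly K[n]}) = 'X_(widen_ord (leqnSn n) i).
Proof. by rewrite mwidenX mnmwiden1. Qed.

Section XcPoly.
Variables (K : fieldType) (c : K).
Local Notation MP := {mpoly K[4]}.

Definition Xvec : 'I_4 -> MP := fun i => 'X_i.

Lemma mesym1_4 : mesym 4 K 1 = 'X_i0 + 'X_i1 + 'X_i2 + 'X_i3.
Proof. rewrite mesym1E !big_ord_recl big_ord0 addr0; name_vars; ring. Qed.

Lemma mesym3_4 : mesym 4 K 3
  = 'X_i0 * 'X_i1 * 'X_i2 + 'X_i0 * 'X_i1 * 'X_i3 + 'X_i0 * 'X_i2 * 'X_i3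
    + 'X_i1 * 'X_i2 * 'X_i3.
Proof.
rewrite (mesymSS K 3 2) (mesymSS K 2 1) (mesymSS K 1 0) !mesymnnE mesym0E.
rewrite !big_ord_recl !big_ord0 !mulr1 !(mwidenD, mwidenM, mwiden1, mwidenX1) mul1r.
by name_vars; ring.
Qed.

Lemma mesym4_4 : mesym 4 K 4 = 'X_i0 * 'X_i1 * 'X_i2 * 'X_i3.
Proof. rewrite mesymnnE !big_ord_recl big_ord0 mulr1; name_vars; ring. Qed.

Lemma Xc_polyE : Xc_poly c = quartic c%:MP Xvec.
Proof.
rewrite /Xc_poly mesym1_4 mesym3_4 mesym4_4 -mul_mpolyC.
by rewrite /quartic /sym1 /sym3 /sym4 /Xvec; ring.
Qed.

Lemma mderivXvec (k i : 'I_4) : ('X_k : MP)^`M(i) = (unitv i k)%:MP.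
Proof.
rewrite mderivX mnm1E /unitv val_eqE; case: eqP => [->|_]; last by rewrite scale0r.
have -> : (U_(i) - U_(i))%MM = 0%MM by apply/mnmP=> j; rewrite mnmBE subnn mnm0E.
by rewrite mpolyX0 scale1r.
Qed.

Lemma quartic_mderiv (x : 'I_4 -> MP) i :
  (quartic c%:MP x)^`M(i) = dquartic c%:MP x (fun k => (x k)^`M(i)).
Proof.
rewrite /quartic /dquartic /sym1 /sym3 /sym4 /sym3_lin /sym4_lin.
by rewrite !(mderivD, mderivM) mderivC; ring.
Qed.

Lemma taylor2_mderiv (a z : 'I_4 -> MP) i : (forall k, (a k)^`M(i) = 0) ->
  (taylor2 c%:MP a z)^`M(i) = polar2 c%:MP a z (fun k => (z k)^`M(i)).
Proof.
move=> ha; rewrite /polar2 /taylor2 /sym1 /sym3_lin /sym4_quad /vadd.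
by rewrite !(mderivD, mderivM) mderivC !ha; ring.
Qed.

Lemma Xc_poly_eval (v : 'I_4 -> K) : (Xc_poly c).@[v] = quartic c v.
Proof.
rewrite Xc_polyE (quartic_rmorph (meval v)) /= mevalC.
by apply: quartic_eqfun => i; exact: mevalXU.
Qed.

Lemma Xc_poly_deriv_eval (v : 'I_4 -> K) i :
  ((Xc_poly c)^`M(i)).@[v] = dquartic c v (unitv i).
Proof.
rewrite Xc_polyE quartic_mderiv (dquartic_rmorph (meval v)) /= mevalC.
by apply: dquartic_eqfun => k /=; rewrite /Xvec ?mderivXvec ?mevalXU ?mevalC.
Qed.

End XcPoly.

Section CharTwo.
Variables (K : fieldType) (hchar : 2%N \in [pchar K]).

Lemma two_eq0 : (2 : K) = 0.
Proof. exact: (pcharf0 hchar). Qed.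

(* Identities in characteristic 2 are proved by exhibiting the multiple of
   2 by which the two sides differ. *)
Lemma eq_mod2 (x y z : K) : x = y + 2 * z -> x = y.
Proof. by rewrite two_eq0 mul0r addr0. Qed.

Lemma eq_of_add_eq0 (x y : K) : x + y = 0 -> y = x.
Proof. by move=> h; apply/eqP; rewrite -subr_eq0 (oppr_pchar2 hchar) addrC h. Qed.

Lemma mulf_eq0_r (u w : K) : u != 0 -> u * w = 0 -> w = 0.
Proof. by move=> hu /eqP; rewrite mulf_eq0 (negbTE hu) => /eqP. Qed.

End CharTwo.

Section SingularLocus.
Variables (K : fieldType) (hchar : 2%N \in [pchar K]) (c : K) (hc : c != 0).
Implicit Types (a b d : K) (v : 'I_4 -> K).

(* In characteristic 2 the partial derivative of the quartic in the
   direction x_i only depends on the three other coordinates a, b, d. *)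
Definition gdir a b d := c * ((a + b) * (a + d) * (b + d)) + a * b * d.

Lemma grad_quartic (x : 'I_4 -> K) : (forall i, dquartic c x (unitv i) = 0) <->
  [/\ gdir (x i1) (x i2) (x i3) = 0, gdir (x i0) (x i2) (x i3) = 0,
      gdir (x i0) (x i1) (x i3) = 0 & gdir (x i0) (x i1) (x i2) = 0].
Proof.
have [e0 e1 e2 e3] :
  [/\ dquartic c x (unitv i0) = gdir (x i1) (x i2) (x i3),
      dquartic c x (unitv i1) = gdir (x i0) (x i2) (x i3),
      dquartic c x (unitv i2) = gdir (x i0) (x i1) (x i3) &
      dquartic c x (unitv i3) = gdir (x i0) (x i1) (x i2)].
  rewrite /dquartic /gdir /sym1 /sym3 /sym3_lin /sym4_lin /unitv /=; split.
  - apply: (eq_mod2 hchar (z := c * (x i1 * x i2 * x i3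
      + x i0 * (x i1 * x i2 + x i1 * x i3 + x i2 * x i3)))); ring.
  - apply: (eq_mod2 hchar (z := c * (x i0 * x i2 * x i3
      + x i1 * (x i0 * x i2 + x i0 * x i3 + x i2 * x i3)))); ring.
  - apply: (eq_mod2 hchar (z := c * (x i0 * x i1 * x i3
      + x i2 * (x i0 * x i1 + x i0 * x i3 + x i1 * x i3)))); ring.
  - apply: (eq_mod2 hchar (z := c * (x i0 * x i1 * x i2
      + x i3 * (x i0 * x i1 + x i0 * x i2 + x i1 * x i2)))); ring.
split=> [h|[h0 h1 h2 h3] i]; first by rewrite -e0 -e1 -e2 -e3; split; apply: h.
by case4 i; rewrite ?e0 ?e1 ?e2 ?e3.
Qed.

(* On a coordinate face (one of a, b, d equal to 0) the partial derivative
   is c b d (b + d), which forces the two other coordinates to agree. *)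
Lemma face_eq b d : b != 0 -> d != 0 -> c * (b * d * (b + d)) = 0 -> d = b.
Proof.
move=> hb hd /(mulf_eq0_r hc) /(mulf_eq0_r (mulf_neq0 hb hd)).
exact: eq_of_add_eq0.
Qed.

Lemma gdir_diag a : a != 0 -> gdir a a a != 0.
Proof.
move=> ha; have -> : gdir a a a = a * a * a.
  by apply: (eq_mod2 hchar (z := 4 * (c * (a * a * a)))); rewrite /gdir; ring.
by rewrite !mulf_neq0.
Qed.

Lemma gdir_sums_neq0 a b d : a != 0 -> b != 0 -> d != 0 -> gdir a b d = 0 ->
  [/\ a + b != 0, a + d != 0 & b + d != 0].
Proof.
move=> ha hb hd hg; have habd : a * b * d != 0 by rewrite !mulf_neq0.
by split; apply/eqP => hs; move/eqP: habd; apply; rewrite -hg /gdir hs; ring.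
Qed.

(* There is no singular point with all coordinates nonzero: multiplying the
   equations by suitable factors and subtracting, one gets
   c D + P S (x_i + x_j) = 0 for the products D of all pairwise sums, P of
   all coordinates and their sum S, whence S = 0 and then c D = 0. *)
Lemma no_sing_off_faces x0 x1 x2 x3 :
  x0 != 0 -> x1 != 0 -> x2 != 0 -> x3 != 0 ->
  gdir x1 x2 x3 = 0 -> gdir x0 x2 x3 = 0 -> gdir x0 x1 x3 = 0 ->
  gdir x0 x1 x2 = 0 -> False.
Proof.
move=> n0 n1 n2 n3 hG0 hG1 hG2 hG3.
have [d12 d13 d23] := gdir_sums_neq0 n1 n2 n3 hG0.
have [d02 d03 _] := gdir_sums_neq0 n0 n2 n3 hG1.
have [d01 _ _] := gdir_sums_neq0 n0 n1 n3 hG2.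
set D := (x0 + x1) * (x0 + x2) * (x0 + x3) * (x1 + x2) * (x1 + x3) * (x2 + x3).
set P := x0 * x1 * x2 * x3.
set S := x0 + x1 + x2 + x3.
have hD : c * D != 0 by rewrite /D !mulf_neq0.
have elim01 : (x0 - x1) * (c * D + P * S * (x0 + x1)) = 0.
  transitivity (x0 * ((x0 + x1) * (x0 + x2) * (x0 + x3)) * gdir x1 x2 x3
              - x1 * ((x0 + x1) * (x1 + x2) * (x1 + x3)) * gdir x0 x2 x3).
    by rewrite /gdir /D /P /S; ring.
  by rewrite hG0 hG1 !mulr0 subrr.
have elim02 : (x0 - x2) * (c * D + P * S * (x0 + x2)) = 0.
  transitivity (x0 * ((x0 + x1) * (x0 + x2) * (x0 + x3)) * gdir x1 x2 x3
              - x2 * ((x0 + x2) * (x1 + x2) * (x2 + x3)) * gdir x0 x1 x3).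
    by rewrite /gdir /D /P /S; ring.
  by rewrite hG0 hG2 !mulr0 subrr.
have /(mulf_eq0_r)/(_ elim01) e01 : x0 - x1 != 0 by rewrite (oppr_pchar2 hchar).
have /(mulf_eq0_r)/(_ elim02) e02 : x0 - x2 != 0 by rewrite (oppr_pchar2 hchar).
have elim12 : (x1 - x2) * (P * S) = 0.
  transitivity ((c * D + P * S * (x0 + x1)) - (c * D + P * S * (x0 + x2))).
    by ring.
  by rewrite e01 e02 subrr.
have /(mulf_eq0_r)/(_ elim12) PS0 : x1 - x2 != 0 by rewrite (oppr_pchar2 hchar).
by move/eqP: hD; apply; rewrite -e01 PS0 mul0r addr0.
Qed.

Definition vec4 (x0 x1 x2 x3 : K) : 'I_4 -> K := fun i =>
  match val i with 0%N => x0 | 1%N => x1 | 2%N => x2 | _ => x3 end.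

Lemma vec4E v : v =1 vec4 (v i0) (v i1) (v i2) (v i3).
Proof. by move=> i; case4 i. Qed.

Ltac pairv_pointwise := let i := fresh "i" in
  move=> i; case4 i; rewrite /pairv /vec4 /=; ring.

(* The case analysis on the vanishing coordinates: one nonzero coordinate
   gives a unit vector, two force equal coordinates, three or four are
   impossible. *)
Lemma sing_coords x0 x1 x2 x3 :
  ~~ [&& x0 == 0, x1 == 0, x2 == 0 & x3 == 0] ->
  gdir x1 x2 x3 = 0 -> gdir x0 x2 x3 = 0 -> gdir x0 x1 x3 = 0 ->
  gdir x0 x1 x2 = 0 -> exists k l, proj_eq (vec4 x0 x1 x2 x3) (pairv k l).
Proof.
move=> nz hG0 hG1 hG2 hG3.
have [e0|n0] := eqVneq x0 0; have [e1|n1] := eqVneq x1 0;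
have [e2|n2] := eqVneq x2 0; have [e3|n3] := eqVneq x3 0; subst.
- by move: nz; rewrite eqxx.
- by exists i3, i3, x3; split => //; pairv_pointwise.
- by exists i2, i2, x2; split => //; pairv_pointwise.
- have e := face_eq n2 n3 ltac:(by rewrite -hG0 /gdir; ring); subst.
  by exists i2, i3, x2; split => //; pairv_pointwise.
- by exists i1, i1, x1; split => //; pairv_pointwise.
- have e := face_eq n1 n3 ltac:(by rewrite -hG0 /gdir; ring); subst.
  by exists i1, i3, x1; split => //; pairv_pointwise.
- have e := face_eq n1 n2 ltac:(by rewrite -hG0 /gdir; ring); subst.
  by exists i1, i2, x1; split => //; pairv_pointwise.
- have e := face_eq n2 n3 ltac:(by rewrite -hG1 /gdir; ring); subst.
  have e := face_eq n1 n2 ltac:(by rewrite -hG3 /gdir; ring); subst.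
  by move: (gdir_diag n1); rewrite hG0 eqxx.
- by exists i0, i0, x0; split => //; pairv_pointwise.
- have e := face_eq n0 n3 ltac:(by rewrite -hG1 /gdir; ring); subst.
  by exists i0, i3, x0; split => //; pairv_pointwise.
- have e := face_eq n0 n2 ltac:(by rewrite -hG1 /gdir; ring); subst.
  by exists i0, i2, x0; split => //; pairv_pointwise.
- have e := face_eq n2 n3 ltac:(by rewrite -hG0 /gdir; ring); subst.
  have e := face_eq n0 n2 ltac:(by rewrite -hG3 /gdir; ring); subst.
  by move: (gdir_diag n0); rewrite hG1 eqxx.
- have e := face_eq n0 n1 ltac:(by rewrite -hG2 /gdir; ring); subst.
  by exists i0, i1, x0; split => //; pairv_pointwise.
- have e := face_eq n1 n3 ltac:(by rewrite -hG0 /gdir; ring); subst.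
  have e := face_eq n0 n1 ltac:(by rewrite -hG3 /gdir; ring); subst.
  by move: (gdir_diag n0); rewrite hG2 eqxx.
- have e := face_eq n1 n2 ltac:(by rewrite -hG0 /gdir; ring); subst.
  have e := face_eq n0 n1 ltac:(by rewrite -hG2 /gdir; ring); subst.
  by move: (gdir_diag n0); rewrite hG3 eqxx.
- by case: (no_sing_off_faces n0 n1 n2 n3 hG0 hG1 hG2 hG3).
Qed.

Lemma pairv_sing v k l : proj_eq v (pairv k l) ->
  quartic c v = 0 /\ forall i, dquartic c v (unitv i) = 0.
Proof.
case=> a [_ hv]; split.
  by rewrite /quartic /sym1 /sym3 /sym4 !hv; case4 k; case4 l; rewrite /pairv /=; ring.
apply/grad_quartic; rewrite /gdir !hv.
by case4 k; case4 l; rewrite /pairv /= ?(addrr_pchar2 hchar); split; ring.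
Qed.

Lemma sing_iff_pairv v : nonzero_vec v ->
  is_sing_pt (Xc_poly c) v <-> exists k l, proj_eq v (pairv k l).
Proof.
move=> nz; rewrite /is_sing_pt Xc_poly_eval.
split=> [[_ hd]|[k [l /pairv_sing [hF hd]]]]; last first.
  by split=> // i; rewrite Xc_poly_deriv_eval.
have /grad_quartic [hG0 hG1 hG2 hG3] : forall i, dquartic c v (unitv i) = 0.
  by move=> i; rewrite -Xc_poly_deriv_eval.
have nz4 : ~~ [&& v i0 == 0, v i1 == 0, v i2 == 0 & v i3 == 0].
  by case: nz => i; case4 i => /negbTE ->; rewrite ?andbF.
have [k [l hkl]] := sing_coords nz4 hG0 hG1 hG2 hG3.
by exists k, l; apply: proj_eq_eqfunl hkl => i; rewrite -vec4E.
Qed.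

End SingularLocus.

Section HomogeneousPart.
Variables (K : fieldType) (n : nat).
Implicit Types (p q : {mpoly K[n]}).

Lemma hpartE d p m : (hpart d p)@_m = if mdeg m == d then p@_m else 0.
Proof.
rewrite /hpart raddf_sum /=.
under eq_bigr => m' _ do rewrite mcoeffZ mcoeffX.
have [hm|hm] := boolP (m \in msupp p).
  rewrite (big_rem m) //= eqxx mulr1 big1_seq ?addr0 //.
  move=> y /andP [_ hy]; have : y != m.
    by move: hy; rewrite (mem_rem_uniq _ (msupp_uniq p)) inE => /andP [].
  by move/negbTE ->; rewrite mulr0.
rewrite big1_seq ?(memN_msupp_eq0 hm); first by case: ifP.
move=> y /andP [_ hy]; have : y != m by apply: contraNneq hm => <-.
by move/negbTE ->; rewrite mulr0.
Qed.

Lemma hpart2_sum (e0 e1 e2 e3 e4 : {mpoly K[n]}) :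
  e0 \is 0.-homog -> e1 \is 1.-homog -> e2 \is 2.-homog -> e3 \is 3.-homog ->
  e4 \is 4.-homog -> hpart 2 (e0 + e1 + e2 + e3 + e4) = e2.
Proof.
move=> h0 h1 h2 h3 h4; apply/mpolyP => m; rewrite hpartE !mcoeffD.
case: eqP => hm; last by rewrite (dhomog_nemf_coeff h2) //; apply/eqP.
have hm0 : mdeg m != 0%N by rewrite hm.
have hm1 : mdeg m != 1%N by rewrite hm.
have hm3 : mdeg m != 3%N by rewrite hm.
have hm4 : mdeg m != 4%N by rewrite hm.
rewrite (dhomog_nemf_coeff h0 hm0) (dhomog_nemf_coeff h1 hm1).
by rewrite (dhomog_nemf_coeff h3 hm3) (dhomog_nemf_coeff h4 hm4); ring.
Qed.

Lemma dhomogM_eq p q d1 d2 d : p \is d1.-homog -> q \is d2.-homog ->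
  d = (d1 + d2)%N -> p * q \is d.-homog.
Proof. by move=> hp hq ->; apply: dhomogM. Qed.

Lemma dhomogC (x : K) : (x%:MP : {mpoly K[n]}) \is 0.-homog.
Proof. by rewrite -[x%:MP]mulr1 mul_mpolyC; apply: dhomogZ; exact: dhomog1. Qed.

End HomogeneousPart.

Section TangentQuadric.
Variables (K : fieldType) (c : K).
Local Notation MP := {mpoly K[4]}.

Definition chartX (j : 'I_4) : 'I_4 -> MP := fun k => if k == j then 0 else 'X_k.
Definition constv (v : 'I_4 -> K) : 'I_4 -> MP := fun k => (v k)%:MP.

Lemma comp_mpolyXvec (f : 'I_4 -> MP) (i : 'I_4) : 'X_i \mPo [tuple f k | k < 4] = f i.
Proof. by rewrite comp_mpolyXU -tnth_nth tnth_mktuple. Qed.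

Lemma local_equationE v j :
  restrict_chart j (translate (Xc_poly c) v) = quartic c%:MP (vadd (constv v) (chartX j)).
Proof.
rewrite /restrict_chart /translate Xc_polyE.
rewrite (quartic_rmorph (comp_mpoly _)) (quartic_rmorph (comp_mpoly _)) /=.
rewrite !comp_mpolyC; apply: quartic_eqfun => i /=.
by rewrite /Xvec !comp_mpolyXvec /vadd comp_mpolyD comp_mpolyC comp_mpolyXvec.
Qed.

Lemma chartX_homog j k : chartX j k \is 1.-homog.
Proof.
rewrite /chartX; case: eqP => _; first exact: dhomog0.
by rewrite dhomogX; apply/eqP; exact: mdeg1.
Qed.

Ltac pdeg t :=
  lazymatch t with
  | ?x + ?y => pdeg x
  | ?x * ?y => let a := pdeg x in let b := pdeg y in constr:((a + b)%N)
  | constv _ _ => constr:(0%N)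
  | mpolyC _ _ => constr:(0%N)
  | chartX _ _ => constr:(1%N)
  end.
Ltac prove_homog :=
  lazymatch goal with
  | |- is_true ((?x + ?y) \in _) => apply: dhomogD; prove_homog
  | |- is_true ((?x * ?y) \in _) => let a := pdeg x in let b := pdeg y in
       apply: (@dhomogM_eq _ _ _ _ a b); [prove_homog | prove_homog | done]
  | |- is_true (constv _ _ \in _) => apply: dhomogC
  | |- is_true (mpolyC _ _ \in _) => apply: dhomogC
  | |- is_true (chartX _ _ \in _) => apply: chartX_homog
  end.

Lemma tangent_quadricE v j :
  tangent_quadric (Xc_poly c) v j = taylor2 c%:MP (constv v) (chartX j).
Proof.
rewrite /tangent_quadric local_equationE quartic_taylor.
apply: hpart2_sum; rewrite /quartic /dquartic /taylor2 /sym1 /sym3 /sym4;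
  rewrite /sym3_lin /sym4_lin /sym4_quad; prove_homog.
Qed.

Lemma chartX_eval j (y : 'I_4 -> K) k : y j = 0 -> (chartX j k).@[y] = y k.
Proof.
by move=> hy; rewrite /chartX; case: eqP => [->|_]; [rewrite meval0 | exact: mevalXU].
Qed.

Lemma tangent_quadric_eval v j (y : 'I_4 -> K) : y j = 0 ->
  (tangent_quadric (Xc_poly c) v j).@[y] = taylor2 c v y.
Proof.
move=> hy; rewrite tangent_quadricE (taylor2_rmorph (meval y)) /= mevalC.
by apply: taylor2_eqfun => i /=; rewrite ?chartX_eval // /constv mevalC.
Qed.

Lemma tangent_quadric_deriv_eval v j (y : 'I_4 -> K) i : y j = 0 -> i != j ->
  ((tangent_quadric (Xc_poly c) v j)^`M(i)).@[y] = polar2 c v y (unitv i).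
Proof.
move=> hy hij; rewrite tangent_quadricE taylor2_mderiv; last first.
  by move=> k; rewrite /constv mderivC.
rewrite (polar2_rmorph (meval y)) /= mevalC.
apply: polar2_eqfun => k /=; rewrite ?chartX_eval // ?/constv ?mevalC //.
rewrite /chartX; case: eqP => [->|_]; last by rewrite mderivXvec mevalC.
by rewrite mderiv0 meval0 /unitv val_eqE eq_sym (negbTE hij).
Qed.

Lemma smooth_of_trivial_kernel v j :
  (forall y : 'I_4 -> K, y j = 0 -> taylor2 c v y = 0 ->
     (forall i, i != j -> polar2 c v y (unitv i) = 0) -> forall i, y i = 0) ->
  smooth_quadric (tangent_quadric (Xc_poly c) v j) j.
Proof.
move=> ker.
have no_zero : forall y : 'I_4 -> K, y j = 0 -> nonzero_vec y ->
    (tangent_quadric (Xc_poly c) v j).@[y] = 0 ->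
    (forall i, i != j -> ((tangent_quadric (Xc_poly c) v j)^`M(i)).@[y] = 0) -> False.
  move=> y hy [i hi] hq hd; move: hi; rewrite ker ?eqxx //.
    by rewrite -(tangent_quadric_eval v hy).
  by move=> i' hij; rewrite -(tangent_quadric_deriv_eval v hy hij) hd.
pose j' : 'I_4 := if j == i0 then i1 else i0.
have j'j : j' != j by rewrite /j'; case4 j.
split=> [|y hy hnz [hq hd]]; last by apply: (no_zero y) => // i _; exact: hd.
apply/eqP => hq; apply: (no_zero (unitv j')).
- by rewrite /unitv eq_sym val_eqE (negbTE j'j).
- by exists j'; rewrite /unitv eqxx oner_neq0.
- by rewrite hq meval0.
- by move=> i _; rewrite hq mderiv0 meval0.
Qed.

End TangentQuadric.

Section Nodes.
Variables (K : fieldType) (hchar : 2%N \in [pchar K]) (c : K) (hc : c != 0).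

(* At a multiple a e_k of a unit vector, in the chart y_k = 0 with the other
   coordinates y1, y2, y3, the local quadric is c a^2 (y1 y2 + y1 y3 + y2 y3);
   its gradient vanishes only at 0. *)
Lemma quadric_kernel_unit (a y1 y2 y3 : K) : a != 0 ->
  c * (a * a) * (y2 + y3) = 0 -> c * (a * a) * (y1 + y3) = 0 ->
  c * (a * a) * (y1 * y2 + y1 * y3 + y2 * y3) = 0 -> [/\ y1 = 0, y2 = 0 & y3 = 0].
Proof.
move=> ha H1 H2 H0; have hca : c * (a * a) != 0 by rewrite !mulf_neq0.
have e23 := eq_of_add_eq0 hchar (mulf_eq0_r hca H1); subst y3.
have e12 := eq_of_add_eq0 hchar (mulf_eq0_r hca H2); subst y2.
have : y1 * y1 = 0.
  apply: (mulf_eq0_r hca); rewrite -H0.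
  by apply: (eq_mod2 hchar (z := - (c * (a * a) * (y1 * y1)))); ring.
by move/eqP; rewrite mulf_eq0 orbb => /eqP ->.
Qed.

(* At a (e_k + e_m), in the chart y_k = 0 with coordinates y1 = y_m, y2, y3,
   the local quadric is c a^2 (y1 + y2 + y3)(y2 + y3) + a^2 y2 y3 and again
   its gradient vanishes only at 0. *)
Lemma quadric_kernel_pair (a y1 y2 y3 : K) : a != 0 ->
  c * (a * a) * (y2 + y3) = 0 ->
  c * (a * a) * ((y2 + y3) + (y1 + y2 + y3)) + a * a * y3 = 0 ->
  c * (a * a) * ((y1 + y2 + y3) * (y2 + y3)) + a * a * (y2 * y3) = 0 ->
  [/\ y1 = 0, y2 = 0 & y3 = 0].
Proof.
move=> ha H1 H2 H0; have hca : c * (a * a) != 0 by rewrite !mulf_neq0.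
have haa : a * a != 0 by rewrite mulf_neq0.
have e23 := eq_of_add_eq0 hchar (mulf_eq0_r hca H1); subst y3.
have : y2 * y2 = 0.
  apply: (mulf_eq0_r haa); rewrite -H0.
  by apply: (eq_mod2 hchar (z := - (c * (a * a) * ((y1 + y2 + y2) * y2)))); ring.
move/eqP; rewrite mulf_eq0 orbb => /eqP e2; subst y2; split=> //.
by apply: (mulf_eq0_r hca); rewrite -H2; ring.
Qed.

(* The two kernel computations applied to the coordinates m1, m2, m3 of y
   other than y_k (in the pair case m1 is the other index of the support);
   hv : v = a pairv k l, hy : y k = 0, hE and hD are the vanishing of the
   local quadric and of its partials. *)
Ltac kernel_unit ha hv hy hE hD y m1 m2 m3 :=
  let H1 := fresh "H1" in let H2 := fresh "H2" in
  have H1 := hD m1 isT; have H2 := hD m2 isT;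
  move: hE H1 H2; rewrite /polar2 /taylor2 /sym1 /sym3_lin /sym4_quad /vadd;
  rewrite /unitv !hv /pairv /= hy => hE H1 H2;
  have [r1 r2 r3] := quadric_kernel_unit (y1 := y m1) (y2 := y m2) (y3 := y m3) ha
     ltac:(by rewrite -H1; ring) ltac:(by rewrite -H2; ring) ltac:(by rewrite -hE; ring);
  let i := fresh "i" in move=> i; case4 i; done.
Ltac kernel_pair a ha hv hy hE hD v y m1 m2 m3 :=
  let H1 := fresh "H1" in let H2 := fresh "H2" in let hS := fresh "hS" in
  have hS : sym1 v = 0;
    [by rewrite /sym1 !hv /pairv /=; apply: (eq_mod2 hchar (z := a)); ring |];
  have H1 := hD m1 isT; have H2 := hD m2 isT;
  move: hE H1 H2; rewrite /polar2 /taylor2 hS /sym1 /sym3_lin /sym4_quad /vadd;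
  rewrite /unitv !hv /pairv /= hy => hE H1 H2;
  have [r1 r2 r3] := quadric_kernel_pair (y1 := y m1) (y2 := y m2) (y3 := y m3) ha
     ltac:(by rewrite -H1; ring) ltac:(by rewrite -H2; ring) ltac:(by rewrite -hE; ring);
  let i := fresh "i" in move=> i; case4 i; done.

Lemma tangent_kernel v y k l : proj_eq v (pairv k l) -> y k = 0 ->
  taylor2 c v y = 0 -> (forall i, i != k -> polar2 c v y (unitv i) = 0) ->
  forall i, y i = 0.
Proof.
move=> [a [ha hv]] hy hE hD; move: hv hy hD; case4 k; case4 l; move=> hv hy hD.
- kernel_unit ha hv hy hE hD y i1 i2 i3.
- kernel_pair a ha hv hy hE hD v y i1 i2 i3.
- kernel_pair a ha hv hy hE hD v y i2 i1 i3.
- kernel_pair a ha hv hy hE hD v y i3 i1 i2.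
- kernel_pair a ha hv hy hE hD v y i0 i2 i3.
- kernel_unit ha hv hy hE hD y i0 i2 i3.
- kernel_pair a ha hv hy hE hD v y i2 i0 i3.
- kernel_pair a ha hv hy hE hD v y i3 i0 i2.
- kernel_pair a ha hv hy hE hD v y i0 i1 i3.
- kernel_pair a ha hv hy hE hD v y i1 i0 i3.
- kernel_unit ha hv hy hE hD y i0 i1 i3.
- kernel_pair a ha hv hy hE hD v y i3 i0 i1.
- kernel_pair a ha hv hy hE hD v y i0 i1 i2.
- kernel_pair a ha hv hy hE hD v y i1 i0 i2.
- kernel_pair a ha hv hy hE hD v y i2 i0 i1.
- kernel_unit ha hv hy hE hD y i0 i1 i2.
Qed.

Lemma pairv_support (v : 'I_4 -> K) k l j : proj_eq v (pairv k l) -> v j != 0 -> j = k \/ j = l.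
Proof.
case=> a [_ hv]; rewrite hv /pairv.
have [->|jk] := eqVneq j k; first by left.
have [->|jl] := eqVneq j l; first by right.
by rewrite !val_eqE (negbTE jk) (negbTE jl) mulr0 eqxx.
Qed.

Lemma sing_is_node (v : 'I_4 -> K) : nonzero_vec v -> is_sing_pt (Xc_poly c) v ->
  is_node (Xc_poly c) v.
Proof.
move=> nz hs; split=> // j hj; apply: smooth_of_trivial_kernel => y hy hE hD.
have [k [l hkl]] := (sing_iff_pairv hchar hc nz).1 hs.
have [|] := pairv_support hkl hj => ej; subst j; first exact: tangent_kernel hkl hy hE hD.
exact: tangent_kernel (proj_eq_eqfunr (pairvC k l) hkl) hy hE hD.
Qed.

End Nodes.

Section Orbits.
Variable K : fieldType.

Lemma val_perm_eq (s : 'S_4) (i j : 'I_4) :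
  (val (s i) == val j) = (val i == val (s^-1 j)%g).
Proof.
by rewrite !val_eqE; apply/eqP/eqP => [<-|->]; rewrite ?permK ?permKV.
Qed.

Lemma b2R (b : bool) : (if b then 1 else 0 : K) = (b : nat)%:R.
Proof. by case: b. Qed.

Lemma permute_pt0001 (s : 'S_4) :
  permute_coords s (pt0001 K) =1 pairv (s^-1 i3)%g (s^-1 i3)%g.
Proof.
move=> i; rewrite /permute_coords /pt0001 /pairv b2R orbb.
by rewrite -(val_perm_eq s i i3).
Qed.

Lemma permute_pt0011 (s : 'S_4) :
  permute_coords s (pt0011 K) =1 pairv (s^-1 i2)%g (s^-1 i3)%g.
Proof.
move=> i; rewrite /permute_coords /pt0011 /pairv b2R -!val_perm_eq.
by case4 (s i).
Qed.

Lemma pairv_orbit (k l : 'I_4) : exists s : 'S_4,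
  pairv k l =1 permute_coords s (pt0011 K) \/ pairv k l =1 permute_coords s (pt0001 K).
Proof.
have [<-|kl] := eqVneq k l.
  exists (tperm k i3); right => i.
  by rewrite permute_pt0001 tpermV tpermR.
pose m := tperm i2 k i3.
have km : k != m by rewrite /m -{1}(tpermL i2 k) (inj_eq (@perm_inj _ _)).
have s_i2 : tperm m l (tperm i2 k i2) = k by rewrite tpermL tpermD // eq_sym.
have s_i3 : tperm m l (tperm i2 k i3) = l by rewrite -/m tpermL.
exists (tperm i2 k * tperm m l)^-1%g; left => i.
by rewrite permute_pt0011 invgK !permM s_i2 s_i3.
Qed.

Lemma sing_iff_orbit (hchar : 2%N \in [pchar K]) (c : K) (hc : c != 0)
    (v : 'I_4 -> K) : nonzero_vec v ->
  is_sing_pt (Xc_poly c) v <->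
  exists s : 'S_4, proj_eq v (permute_coords s (pt0011 K))
                \/ proj_eq v (permute_coords s (pt0001 K)).
Proof.
move=> nz; rewrite (sing_iff_pairv hchar hc nz); split.
  case=> k [l hkl]; have [s [e|e]] := pairv_orbit k l; exists s.
    by left; apply: proj_eq_eqfunr hkl.
  by right; apply: proj_eq_eqfunr hkl.
case=> s [h|h]; [exists (s^-1 i2)%g, (s^-1 i3)%g | exists (s^-1 i3)%g, (s^-1 i3)%g].
  exact: proj_eq_eqfunr (permute_pt0011 s) h.
exact: proj_eq_eqfunr (permute_pt0001 s) h.
Qed.

End Orbits.

Section TenPoints.
Variable K : fieldType.

Definition support_of (k : 'I_10) : 'I_4 * 'I_4 :=
  nth (i0, i0) [:: (i0, i0); (i1, i1); (i2, i2); (i3, i3); (i0, i1);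
                   (i0, i2); (i0, i3); (i1, i2); (i1, i3); (i2, i3)] k.

Definition sing_pt (k : 'I_10) : 'I_4 -> K :=
  pairv (support_of k).1 (support_of k).2.

Lemma sing_pt_nonzero k : nonzero_vec (sing_pt k).
Proof. by exists (support_of k).1; rewrite /sing_pt /pairv eqxx oner_neq0. Qed.

Lemma proj_eq_pairv k l k' l' : proj_eq (pairv k l) (pairv k' l' : 'I_4 -> K) ->
  forall i : 'I_4, ((val i == val k) || (val i == val l))
          = ((val i == val k') || (val i == val l')).
Proof.
case=> a [ha h] i; move: (h i); rewrite /pairv.
case: (_ || _); case: (_ || _) => //= e.
- by move: e; rewrite mulr0 => /eqP; rewrite oner_eq0.
- by move: e; rewrite mulr1 => /esym/eqP; rewrite (negbTE ha).
Qed.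

Lemma sing_pt_inj k l : proj_eq (sing_pt k) (sing_pt l) -> k = l.
Proof.
move=> /proj_eq_pairv h; apply/val_inj; move: (h i0) (h i1) (h i2) (h i3); clear h.
case: k => [[|[|[|[|[|[|[|[|[|[|k]]]]]]]]]] hk] //;
case: l => [[|[|[|[|[|[|[|[|[|[|l]]]]]]]]]] hl] //=.
Qed.

Lemma sing_pt_cover k l : exists idx, pairv k l =1 sing_pt idx.
Proof.
case4 k; case4 l;
  [ exists (@Ordinal 10 0 isT) | exists (@Ordinal 10 4 isT)
  | exists (@Ordinal 10 5 isT) | exists (@Ordinal 10 6 isT)
  | exists (@Ordinal 10 4 isT) | exists (@Ordinal 10 1 isT)
  | exists (@Ordinal 10 7 isT) | exists (@Ordinal 10 8 isT)
  | exists (@Ordinal 10 5 isT) | exists (@Ordinal 10 7 isT)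
  | exists (@Ordinal 10 2 isT) | exists (@Ordinal 10 9 isT)
  | exists (@Ordinal 10 6 isT) | exists (@Ordinal 10 8 isT)
  | exists (@Ordinal 10 9 isT) | exists (@Ordinal 10 3 isT) ];
  by move=> i; case4 i.
Qed.

End TenPoints.

Unset Implicit Arguments.
Theorem proposition4p7 (K : closedFieldType) (hchar : 2%N \in [pchar K])
  (c : K) (hc : c != 0) :
  (forall v : 'I_4 -> K, nonzero_vec v ->
     (is_sing_pt (Xc_poly c) v <->
      exists s : 'S_4, proj_eq v (permute_coords s (pt0011 K))
                    \/ proj_eq v (permute_coords s (pt0001 K))))
  /\ (exists pts : 'I_10 -> ('I_4 -> K),
        (forall k, nonzero_vec (pts k) /\ is_sing_pt (Xc_poly c) (pts k))
        /\ (forall k l, proj_eq (pts k) (pts l) -> k = l)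
        /\ (forall v : 'I_4 -> K, nonzero_vec v -> is_sing_pt (Xc_poly c) v ->
              exists k, proj_eq v (pts k)))
  /\ (forall v : 'I_4 -> K, nonzero_vec v -> is_sing_pt (Xc_poly c) v ->
        is_node (Xc_poly c) v).
Proof.
split; first by move=> v; exact: sing_iff_orbit.
split; last by move=> v; exact: sing_is_node.
exists (@sing_pt K); split; [|split; first exact: sing_pt_inj].
  move=> k; split; first exact: sing_pt_nonzero.
  apply/(sing_iff_pairv hchar hc (sing_pt_nonzero K k)).
  by exists (support_of k).1, (support_of k).2; exact: proj_eq_refl.
move=> v nz /(sing_iff_pairv hchar hc nz) [k [l hkl]].
have [idx hidx] := sing_pt_cover K k l.
by exists idx; exact: proj_eq_eqfunr hidx hkl.
Qed.
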